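(* Let $G$ be an $n$-vertex graph with average degree $d>0$. Then there exist real numbers $D_1,D_2\geq d/4$ and a non-empty bipartite subgraph $G'$ of $G$ with parts $X_1$ and $X_2$ such that for every $x\in X_1$ we have $d_{G'}(x)\geq \frac{D_1}{256(\log n)^2}$ and $d_G(x)\leq D_1$, and for every $x\in X_2$ we have $d_{G'}(x)\geq \frac{D_2}{256(\log n)^2}$ and $d_G(x)\leq D_2$.
   Context: $d_F(x)$ denotes the degree of $x$ in the graph $F$; $\log$ is the natural logarithm. *)

From HB Require Import structures.
From mathcomp Require Import all_boot all_order all_algebra.
From mathcomp Require Import all_classical all_reals all_analysis.
Set Implicit Arguments. Unset Strict Implicit. Unset Printing Implicit Defensive.
Import Order.TTheory GRing.Theory Num.Theory.
Local Open Scope ring_scope.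

Definition simple_graph (T : finType) (e : rel T) : Prop :=
  symmetric e /\ irreflexive e.

Definition deg (T : finType) (e : rel T) (x : T) : nat := #|[set y | e x y]|.

Definition avg_deg (R : realType) (T : finType) (e : rel T) : R :=
  (\sum_(x : T) (deg e x)%:R) / #|T|%:R.

Definition bipartite_subgraph (T : finType) (e F : rel T) (X1 X2 : {set T})
  : Prop :=
  [/\ symmetric F, subrel F e, [disjoint X1 & X2] &
      forall x y, F x y -> (x \in X1 /\ y \in X2) \/ (x \in X2 /\ y \in X1)].

From HB Require Import structures.
From mathcomp Require Import all_boot all_order all_algebra.
From mathcomp Require Import all_classical all_reals all_analysis.
From mathcomp Require Import lra zify.
Import Order.TTheory GRing.Theory Num.Theory.
Local Open Scope ring_scope.

(* Write D(x) = 2^(floor(log2 d(x)) + 1) for the dyadic rounding of the degree,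
   so that d(x) < D(x) <= 2 d(x).  The proof has four steps.
   1. Pruning: vertices with d(x) = 0 or D(x) < d/4 have degree <= d/4, so
      deleting them keeps at least half of the degree sum n d.
   2. Max cut: a locally maximal cut S of the pruned graph keeps half of the
      degree of every vertex, so at least n d / 8 edges go from S to ~S.
   3. Pigeonhole on levels: D(x) takes at most k+1 values, k = floor(log2 (n-1)),
      so for some levels i, j the vertices of S of level i and of ~S of level j
      span at least n d / (8 (k+1)^2) edges.
   4. Minimum degree: in this bipartite graph the weights D(x)/(256 (log n)^2)
      sum to less than the number of edges (as k+1 < 4 log n), and deleting
      vertices of too small degree one by one leaves a nonempty subgraph. *)

Section GraphCounting.
Context {T : finType}.
Implicit Types (r : rel T) (A B W : {set T}).

Lemma card_set_sum (b : pred T) : #|[set y | b y]| = (\sum_y b y)%N.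
Proof. by rewrite -sum1dep_card big_mkcond /=; apply: eq_bigr => y _; case: (b y). Qed.

Definition sub_rel r W : rel T := fun x y => [&& r x y, x \in W & y \in W].

Definition degsum r : nat := (\sum_x deg r x)%N.

Definition edges r A B : nat := (\sum_(x in A) #|[set y in B | r x y]|)%N.

Lemma degsumE r : degsum r = (\sum_x \sum_y r x y)%N.
Proof. by apply: eq_bigr => x _; rewrite /deg card_set_sum. Qed.

Lemma edgesE r A B :
  edges r A B = (\sum_x \sum_y [&& x \in A, y \in B & r x y])%N.
Proof.
rewrite /edges big_mkcond; apply: eq_bigr => x _; case: (x \in A) => /=.
  by rewrite card_set_sum.
by rewrite big1.
Qed.

Lemma edges_sym r A B : symmetric r -> edges r A B = edges r B A.
Proof.
move=> r_sym; rewrite !edgesE exchange_big; apply: eq_bigr => x _.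
by apply: eq_bigr => y _; rewrite r_sym; case: (x \in B) (y \in A) => [] [].
Qed.

Lemma edges_sub_rel r W A B :
  edges (sub_rel r W) A B = edges r (A :&: W) (B :&: W).
Proof.
rewrite !edgesE; apply: eq_bigr => x _; apply: eq_bigr => y _; rewrite /sub_rel !inE.
by case: (r x y) (x \in A) (x \in W) (y \in B) (y \in W) => [] [] [] [] [].
Qed.

Lemma degsum_prune r W : symmetric r ->
  (degsum r <= degsum (sub_rel r W) + 2 * \sum_(x in ~: W) deg r x)%N.
Proof.
move=> r_sym.
have -> : (\sum_(x in ~: W) deg r x = edges r (~: W) [set: T])%N.
  by apply: eq_bigr => x _; apply: eq_card => y; rewrite !inE.
rewrite mul2n -addnn {2}(edges_sym _ _ _ r_sym) !degsumE !edgesE -!big_split.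
apply: leq_sum => x _; rewrite -!big_split; apply: leq_sum => y _ /=.
by rewrite /sub_rel !inE; case: (r x y) (x \in W) (y \in W) => [] [] [].
Qed.

Lemma edges_partition (I : finType) (f : T -> I) r A B :
  edges r A B =
  (\sum_(p : I * I) edges r [set x in A | f x == p.1] [set y in B | f y == p.2])%N.
Proof.
rewrite edgesE (eq_bigr _ (fun p _ => edgesE _ _ _)) /= [RHS]exchange_big.
apply: eq_bigr => x _; rewrite [RHS]exchange_big; apply: eq_bigr => y _.
rewrite (bigD1 (f x, f y)) //= !inE !eqxx !andbT big1 ?addn0 // => -[i j] ij.
apply/eqP; rewrite eqb0 !inE /=; apply: contra ij.
by case/and3P=> /andP[_ /eqP <-] /andP[_ /eqP <-].
Qed.

Lemma deg_lt_card r x : irreflexive r -> (deg r x < #|T|)%N.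
Proof.
move=> r_irr; rewrite /deg -cardsT (cardsD1 x [set: T]) inE add1n ltnS.
apply/subset_leq_card/fintype.subsetP => y; rewrite !inE andbT => rxy.
by apply: contraTneq rxy => ->; rewrite r_irr.
Qed.

Lemma sub_rel_sym r W : symmetric r -> symmetric (sub_rel r W).
Proof.
move=> r_sym x y; rewrite /sub_rel r_sym.
by case: (x \in W) (y \in W) => [] []; rewrite ?andbT ?andbF.
Qed.

Lemma sub_rel_irr r W : irreflexive r -> irreflexive (sub_rel r W).
Proof. by move=> r_irr x; rewrite /sub_rel r_irr. Qed.

End GraphCounting.

Section MaxCut.
Context {T : finType}.
Variable r : rel T.
Hypotheses (r_sym : symmetric r) (r_irr : irreflexive r).
Implicit Types (S : {set T}) (x y z : T).

Definition cut_pair S y z := r y z && ((y \in S) != (z \in S)).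

Definition cross S x := #|[set y | cut_pair S x y]|.

Definition cut_size S := (\sum_x cross S x)%N.

Definition cut_avoiding S x :=
  (\sum_(y | y != x) \sum_(z | z != x) cut_pair S y z)%N.

Definition flip S x : {set T} := [set z | (z \in S) (+) (z == x)].

Lemma cut_sizeE S x : cut_size S = (cut_avoiding S x + 2 * cross S x)%N.
Proof.
have crossE y : cross S y = (\sum_z cut_pair S y z)%N by exact: card_set_sum.
rewrite /cut_size (bigD1 x) //=.
rewrite (eq_bigr (fun y => cut_pair S y x + \sum_(z | z != x) cut_pair S y z)%N);
  last by move=> y _; rewrite crossE (bigD1 x).
rewrite big_split /=.
have -> : (\sum_(y | y != x) cut_pair S y x = cross S x)%N.
  rewrite crossE [RHS](bigD1 x) //= /cut_pair r_irr add0n.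
  by apply: eq_bigr => y _; rewrite /cut_pair r_sym eq_sym.
rewrite /cut_avoiding; lia.
Qed.

Lemma cut_avoiding_flip S x : cut_avoiding (flip S x) x = cut_avoiding S x.
Proof.
apply: eq_bigr => y yx; apply: eq_bigr => z zx.
by rewrite /cut_pair !inE (negbTE yx) (negbTE zx) !addbF.
Qed.

Lemma cross_flip S x : (cross (flip S x) x + cross S x)%N = deg r x.
Proof.
rewrite /cross /deg !card_set_sum -big_split; apply: eq_bigr => y _.
rewrite /cut_pair !inE eqxx addbT.
have [->|yx] := eqVneq y x; first by rewrite r_irr.
by rewrite addbF; case: (r x y) (x \in S) (y \in S) => [] [] [].
Qed.

Lemma cut_size_edges S : cut_size S = (2 * edges r S (~: S))%N.
Proof.
rewrite mul2n -addnn {2}(edges_sym _ _ _ r_sym) !edgesE -big_split.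
apply: eq_bigr => x _; rewrite /cross card_set_sum -big_split.
apply: eq_bigr => y _; rewrite /cut_pair !inE.
by case: (r x y) (x \in S) (y \in S) => [] [] [].
Qed.

(* A maximum cut keeps at least half the neighbours of every vertex: otherwise
   moving that vertex would enlarge it. *)
Lemma max_cut : exists S, forall x, (deg r x <= 2 * cross S x)%N.
Proof.
have [S _ S_max] := @arg_maxnP _ [set: T] predT cut_size isT.
exists S => x; have := S_max (flip S x) isT.
rewrite (cut_sizeE (flip S x) x) (cut_sizeE S x) cut_avoiding_flip.
rewrite -(cross_flip S x); lia.
Qed.

Lemma max_cut_edges : exists S, (degsum r <= 4 * edges r S (~: S))%N.
Proof.
have [S S_cut] := max_cut; exists S.
have : (degsum r <= 2 * cut_size S)%N.
  by rewrite /degsum /cut_size big_distrr /=; apply: leq_sum => x _.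
rewrite cut_size_edges; lia.
Qed.

End MaxCut.

Section DenseSubgraph.
Context {T : finType}.
Variable r : rel T.
Hypotheses (r_sym : symmetric r) (r_irr : irreflexive r).
Implicit Types (W P Q : {set T}).

Lemma deg_sub_rel W x : x \in W -> deg (sub_rel r W) x = (\sum_(y in W) r x y)%N.
Proof.
move=> xW; rewrite /deg card_set_sum [RHS]big_mkcond /=; apply: eq_bigr => y _.
by rewrite /sub_rel xW /=; case: (y \in W); rewrite ?andbT ?andbF.
Qed.

Lemma degsum_sub_rel W :
  degsum (sub_rel r W) = (\sum_(x in W) \sum_(y in W) r x y)%N.
Proof.
rewrite /degsum [RHS]big_mkcond /=; apply: eq_bigr => x _.
have [xW|xW] := boolP (x \in W); first exact: deg_sub_rel.
rewrite /deg card_set_sum big1 // => y _.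
by rewrite /sub_rel (negbTE xW) /= andbF.
Qed.

Lemma degsum_delete W x : x \in W ->
  degsum (sub_rel r W) = (degsum (sub_rel r (W :\ x)) + 2 * deg (sub_rel r W) x)%N.
Proof.
move=> xW; rewrite (deg_sub_rel _ _ xW) !degsum_sub_rel [LHS](big_setD1 x xW) /=.
set g := (\sum_(y in W) r x y)%N.
under eq_bigr => z _ do rewrite (big_setD1 x xW).
rewrite big_split /=.
have -> : (\sum_(z in W :\ x) r z x = g)%N.
  rewrite /g (big_setD1 x xW) r_irr /= add0n.
  by apply: eq_bigr => z _; rewrite r_sym.
lia.
Qed.

(* If the degree sum of r on W exceeds twice the total weight of W, deleting
   vertices of degree below their weight one at a time stops at a nonempty
   W' in which every vertex has degree at least its weight. *)
Lemma dense_subgraph (R : realType) (t : T -> R) W :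
  (\sum_(x in W) t x) *+ 2 < (degsum (sub_rel r W))%:R ->
  exists2 W' : {set T}, W' \subset W &
    (0 < #|W'|)%N /\ forall x, x \in W' -> t x <= (deg (sub_rel r W') x)%:R.
Proof.
have [m] := ubnP #|W|; elim: m W => // m IH W W_small dense.
have [/existsP[x /andP[xW low]]|all_high] :=
  boolP [exists x in W, (deg (sub_rel r W) x)%:R < t x].
  have smaller : (#|W :\ x| < m)%N.
    by move: W_small; rewrite (cardsD1 x W) xW.
  have [|W' sub' W'_ok] := IH (W :\ x) smaller.
  - move: dense; rewrite (degsum_delete _ _ xW) (big_setD1 x xW) /= natrD natrM !mulr2n.
    lra.
  - by exists W'; first exact: fintype.subset_trans sub' (subD1set W x).
exists W => //; split.
  rewrite card_gt0; apply: contraTneq dense => ->.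
  by rewrite degsum_sub_rel !big_set0 mul0rn mulr0n ltxx.
move=> x xW; rewrite leNgt; apply: contraNN all_high => low.
by apply/existsP; exists x; rewrite xW.
Qed.

End DenseSubgraph.

Section Bipartite.
Context {T : finType}.
Variable r : rel T.
Hypotheses (r_sym : symmetric r) (r_irr : irreflexive r).
Implicit Types (P Q : {set T}).

Definition bip_rel P Q : rel T :=
  fun x y => r x y && ((x \in P) && (y \in Q) || (x \in Q) && (y \in P)).

Lemma degsum_bip P Q : [disjoint P & Q] ->
  degsum (sub_rel (bip_rel P Q) (P :|: Q)) = (2 * edges r P Q)%N.
Proof.
move=> PQ; have PQ_excl z : ~~ ((z \in P) && (z \in Q)).
  by apply/andP => -[zP]; rewrite (disjointFr PQ zP).
rewrite mul2n -addnn {2}(edges_sym _ _ _ r_sym) degsumE !edgesE -big_split.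
apply: eq_bigr => x _; rewrite -big_split; apply: eq_bigr => y _ /=.
rewrite /sub_rel /bip_rel !inE; move: (PQ_excl x) (PQ_excl y).
by case: (r x y) (x \in P) (x \in Q) (y \in P) (y \in Q) => [] [] [] [] [].
Qed.

Lemma bipartite_min_degree (R : realType) P Q (t : T -> R) :
  [disjoint P & Q] -> \sum_(x in P :|: Q) t x < (edges r P Q)%:R ->
  exists (F : rel T) (X1 X2 : {set T}),
    [/\ bipartite_subgraph r F X1 X2, X1 \subset P, X2 \subset Q,
        (0 < #|X1 :|: X2|)%N & forall x, x \in X1 :|: X2 -> t x <= (deg F x)%:R].
Proof.
move=> PQ sparse; set B := bip_rel P Q.
have B_sym : symmetric B.
  move=> x y; rewrite /B /bip_rel r_sym.
  by case: (x \in P) (x \in Q) (y \in P) (y \in Q) => [] [] [] [].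
have B_irr : irreflexive B by move=> x; rewrite /B /bip_rel r_irr.
have [|W WPQ [W_ne W_deg]] := @dense_subgraph _ B B_sym B_irr R t (P :|: Q).
  by rewrite degsum_bip // natrM !mulr2n; lra.
have W_parts : W :&: P :|: W :&: Q = W by rewrite -finset.setIUr; apply/finset.setIidPl.
exists (sub_rel B W), (W :&: P), (W :&: Q); rewrite W_parts; split => //.
- split; first exact: sub_rel_sym.
  + by move=> x y /and3P[/andP[rxy _] _ _].
  + exact: disjointW (subsetIr W P) (subsetIr W Q) PQ.
  move=> x y /and3P[/andP[_ xy] xW yW]; rewrite !inE xW yW /=.
  by case/orP: xy => /andP[-> ->]; [left | right].
- exact: subsetIr.
- exact: subsetIr.
Qed.

End Bipartite.

Lemma sum_le_card_max (I : finType) (f : I -> nat) (i0 : I) :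
  exists i, (\sum_j f j <= #|I| * f i)%N.
Proof.
have [i _ i_max] := @arg_maxnP I i0 predT f isT.
exists i; rewrite -sum_nat_const; apply: leq_sum => j _; exact: i_max.
Qed.

Definition dyadic (m : nat) : nat := 2 ^ (trunc_log 2 m).+1.

Lemma ltn_dyadic m : (m < dyadic m)%N.
Proof. exact: trunc_log_ltn. Qed.

Lemma dyadic_le_double m : (0 < m)%N -> (dyadic m <= 2 * m)%N.
Proof. by move=> m_gt0; rewrite /dyadic expnS leq_mul2l /= trunc_logP. Qed.

(* The estimate k + 1 < 4 log n whenever 2^k < n, squared in the form in which
   it bounds the number of level pairs by the scaling factor 256 (log n)^2. *)
Lemma ln2_ge_half (R : realType) : 1 / 2 <= ln (2 : R).
Proof.
have : ln (1 + - (1 / 2)) <= - (1 / 2) :> R by apply: le_ln1Dx; lra.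
have -> : 1 + - (1 / 2) = (2 : R)^-1 by lra.
rewrite lnV ?posrE //; lra.
Qed.

Lemma log_bound (R : realType) (n k : nat) :
  (2 ^ k < n)%N -> (k.+1)%:R < 4 * ln (n%:R : R).
Proof.
move=> kn; have pow_pos : (0 < 2 ^ k)%N by rewrite expn_gt0.
have n_pos : (0 : R) < n%:R by rewrite ltr0n; lia.
have ln2_le : ln (2 : R) <= ln n%:R by rewrite ler_ln ?posrE // ler_nat; lia.
have lnX_lt : ln (2 ^+ k : R) < ln n%:R.
  by rewrite ltr_ln ?posrE ?exprn_gt0 // -natrX ltr_nat.
have k_half : k%:R * (1 / 2) <= ln (2 : R) *+ k.
  by rewrite -[ln 2 *+ k]mulr_natl; apply: ler_wpM2l; [exact: ler0n | exact: ln2_ge_half].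
rewrite lnXn // in lnX_lt; have := @ln2_ge_half R; rewrite -[(k.+1)%:R]natr1; lra.
Qed.

Lemma log_scale_bound (R : realType) (n k : nat) :
  (2 ^ k < n)%N -> 16 * (k.+1 ^ 2)%:R < 256 * ln (n%:R : R) ^+ 2.
Proof.
move=> /(log_bound R) k_lt; rewrite natrX.
have k_ge0 : (0 : R) <= (k.+1)%:R by rewrite ler0n.
nra.
Qed.

Section AverageDegree.
Variable R : realType.
Context {T : finType}.
Variable e : rel T.
Hypotheses (e_sym : symmetric e) (e_irr : irreflexive e).
Hypothesis d_gt0 : 0 < avg_deg R e.

Local Notation n := #|T|.
Local Notation d := (avg_deg R e).

Lemma degree_exists : exists x, (0 < deg e x)%N.
Proof.
apply/existsP; apply: contraTT d_gt0; rewrite negb_exists => /forallP deg0.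
rewrite /avg_deg big1 ?mul0r ?ltxx // => x _.
by move: (deg0 x); rewrite -leqNgt leqn0 => /eqP ->.
Qed.

Lemma card_ge2 : (2 <= n)%N.
Proof. have [x x_deg] := degree_exists; have := deg_lt_card e x e_irr; lia. Qed.

Lemma sum_deg_avg : \sum_x ((deg e x)%:R : R) = d * n%:R.
Proof. by rewrite /avg_deg mulfVK // pnatr_eq0 -lt0n; have := card_ge2; lia. Qed.

Definition vertex_scale x : R := (dyadic (deg e x))%:R.

Definition good_set : {set T} := [set x | (0 < deg e x)%N && (d / 4 <= vertex_scale x)].

Lemma deg_lt_scale x : (deg e x)%:R < vertex_scale x.
Proof. by rewrite ltr_nat ltn_dyadic. Qed.

Lemma scale_le_double x : x \in good_set -> vertex_scale x <= 2 * (deg e x)%:R.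
Proof. by rewrite inE => /andP[x_deg _]; rewrite -natrM ler_nat dyadic_le_double. Qed.

Lemma bad_deg_small x : x \notin good_set -> (deg e x)%:R <= d / 4.
Proof.
rewrite inE negb_and -leqNgt leqn0 -ltNge => /orP[/eqP->|small].
  by apply: divr_ge0 => //; exact: ltW.
exact: le_trans (ltW (deg_lt_scale x)) (ltW small).
Qed.

Lemma pruned_degsum : d * n%:R / 2 <= (degsum (sub_rel e good_set))%:R.
Proof.
have bad_sum : \sum_(x in ~: good_set) ((deg e x)%:R : R) <= n%:R * (d / 4).
  apply: (@le_trans _ _ (\sum_(x in ~: good_set) (d / 4))).
    by apply: ler_sum => x; rewrite inE; exact: bad_deg_small.
  rewrite sumr_const -[_ *+ #|_|]mulr_natl; apply: ler_wpM2r; last by rewrite ler_nat max_card.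
  by apply: divr_ge0 => //; exact: ltW.
move: (degsum_prune e good_set e_sym); rewrite -(ler_nat R) natrD natrM {1}/degsum.
rewrite !natr_sum sum_deg_avg; lra.
Qed.

Lemma heavy_cut : exists S : {set T},
  d * n%:R / 8 <= (edges e (S :&: good_set) (~: S :&: good_set))%:R.
Proof.
have [S cutS] := max_cut_edges _ (sub_rel_sym e good_set e_sym)
  (sub_rel_irr e good_set e_irr).
exists S; rewrite -edges_sub_rel.
move: cutS; rewrite -(ler_nat R) natrM; have := pruned_degsum; lra.
Qed.

Definition top_level : nat := trunc_log 2 n.-1.

Definition level x : 'I_top_level.+1 := inord (trunc_log 2 (deg e x)).

Lemma levelE x : level x = trunc_log 2 (deg e x) :> nat.
Proof.
rewrite inordK // ltnS; apply: leq_trunc_log.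
by have := deg_lt_card e x e_irr; lia.
Qed.

Lemma top_level_bound : (2 ^ top_level < n)%N.
Proof. by have := card_ge2; have := @trunc_logP 2 n.-1 isT; rewrite /top_level; lia. Qed.

Definition level_class (A : {set T}) (i : 'I_top_level.+1) : {set T} :=
  [set x in A :&: good_set | level x == i].

Lemma heavy_level_pair : exists (S : {set T}) (i j : 'I_top_level.+1),
  d * n%:R / 8 <=
  (top_level.+1 ^ 2)%:R * (edges e (level_class S i) (level_class (~: S) j))%:R.
Proof.
have [S heavy] := heavy_cut.
pose f p := edges e (level_class S p.1) (level_class (~: S) p.2).
have [[i j] max_ij] := sum_le_card_max _ f (ord0, ord0).
exists S, i, j; apply: (le_trans heavy); rewrite -natrM ler_nat (edges_partition _ level).
by move: max_ij; rewrite card_prod card_ord mulnn.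
Qed.

Lemma level_class_scale A i x : x \in level_class A i ->
  vertex_scale x = Num.max (2 ^ i.+1)%:R (d / 4).
Proof.
rewrite !inE => /andP[/andP[_ /andP[_ quarter]] /eqP x_lvl].
have scale_i : vertex_scale x = (2 ^ i.+1)%:R.
  by rewrite /vertex_scale /dyadic -levelE x_lvl.
by rewrite scale_i in quarter *; apply/esym/max_idPl.
Qed.

Lemma level_classes_disjoint S i j :
  [disjoint level_class S i & level_class (~: S) j].
Proof.
rewrite -finset.setI_eq0; apply/eqP/finset.setP => x; rewrite !inE.
by case: (x \in S); rewrite /= ?andbF.
Qed.

Lemma level_weights_lt S i j :
  d * n%:R / 8 <=
    (top_level.+1 ^ 2)%:R * (edges e (level_class S i) (level_class (~: S) j))%:R ->
  \sum_(x in level_class S i :|: level_class (~: S) j)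
     vertex_scale x / (256 * ln (n%:R : R) ^+ 2)
  < (edges e (level_class S i) (level_class (~: S) j))%:R.
Proof.
set P := level_class S i; set Q := level_class (~: S) j.
set E := (edges e P Q)%:R; set K := (top_level.+1 ^ 2)%:R => heavy.
have c_big := log_scale_bound R _ _ top_level_bound.
have dn_pos : 0 < d * n%:R by rewrite mulr_gt0 // ltr0n; have := card_ge2; lia.
have K_ge0 : 0 <= K by rewrite ler0n.
have E_pos : 0 < E by nra.
have sum_scale : \sum_(x in P :|: Q) vertex_scale x <= 2 * (d * n%:R).
  rewrite -sum_deg_avg mulr_sumr big_mkcond /=; apply: ler_sum => x _.
  case: ifP => [xPQ|_]; last by rewrite mulr_ge0 ?ler0n.
  apply: scale_le_double; move: xPQ; rewrite !inE.
  by case/orP => /andP[/andP[_ ->]].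
rewrite -mulr_suml ltr_pdivrMr; last by nra.
nra.
Qed.

End AverageDegree.

(* The main result: apply the minimum-degree extraction to a heavy pair of level
   classes; D_1 and D_2 are the common dyadic scales of the two classes. *)
Theorem lemma2p3 (R : realType) (T : finType) (e : rel T) (d : R) :
  simple_graph e -> d = avg_deg R e -> 0 < d ->
  exists D1 D2 : R, d / 4 <= D1 /\ d / 4 <= D2 /\
    exists (F : rel T) (X1 X2 : {set T}),
      [/\ bipartite_subgraph e F X1 X2,
          (0 < #|X1 :|: X2|)%N,
          (forall x, x \in X1 ->
             D1 / (256 * (ln (#|T|%:R : R)) ^+ 2) <= (deg F x)%:R
             /\ (deg e x)%:R <= D1) &
          (forall x, x \in X2 ->
             D2 / (256 * (ln (#|T|%:R : R)) ^+ 2) <= (deg F x)%:R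
             /\ (deg e x)%:R <= D2)].
Proof.
move=> [e_sym e_irr] -> d_gt0.
have [S [i [j heavy]]] := heavy_level_pair R e e_sym e_irr d_gt0.
have [F [X1 [X2 [F_bip X1_sub X2_sub X_ne F_deg]]]] :=
  bipartite_min_degree e e_sym e_irr R _ _ _ (level_classes_disjoint R e S i j)
    (level_weights_lt R e e_irr d_gt0 _ _ _ heavy).
exists (Num.max (2 ^ i.+1)%:R (avg_deg R e / 4)),
       (Num.max (2 ^ j.+1)%:R (avg_deg R e / 4)).
do 2 (split; first by rewrite le_max lexx orbT).
exists F, X1, X2; split => // x xX.
- rewrite -(level_class_scale R e e_irr d_gt0 _ _ _ (fintype.subsetP X1_sub x xX)).
  by split; [apply: F_deg; rewrite inE xX | exact/ltW/deg_lt_scale].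
- rewrite -(level_class_scale R e e_irr d_gt0 _ _ _ (fintype.subsetP X2_sub x xX)).
  by split; [apply: F_deg; rewrite inE xX orbT | exact/ltW/deg_lt_scale].
Qed.
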